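(* Let $E$ be a finite set and $V \subset \mathbb R^E$ a linear subspace defining an oriented matroid $M$. If $F \subset E$ is an acyclic flat of $M$, then \[ Y_V \cap (\mathbb R_{\geq 0}^F \times \infty^{E \setminus F}) = \mathcal Y_V \cap (\mathbb R_{\geq 0}^F \times \infty^{E \setminus F}). \]
   Context: $\mathbb P^1_{\mathbb R} = \mathbb R \cup\{\infty\}$. $Y_V$ is the Zariski closure of $V$ in $(\mathbb P^1_{\mathbb R})^E$, and $\mathcal Y_V$ is the closure of $V \cap \mathbb R_{\geq 0}^E$ in $(\mathbb P^1_{\mathbb R})^E$ in the analytic topology. $\mathbb R_{\geq 0}^F \times \infty^{E\setminus F}$ is the set of points with nonnegative real coordinates on $F$ and $\infty$ on $E\setminus F$. Flats of $M$ are the zero sets $\{i : v_i = 0\}$ of $v \in V$; a flat $F$ is acyclic if some $v\in V$ has $v_i=0$ for $i\in F$ and $v_i>0$ for $i\notin F$. *)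

From HB Require Import structures.
From mathcomp Require Import all_boot all_order all_algebra all_field.
From mathcomp Require Import mpoly.
From mathcomp Require Import reals.

Set Implicit Arguments.
Unset Strict Implicit.
Unset Printing Implicit Defensive.

Import Order.TTheory GRing.Theory Num.Theory.
Local Open Scope ring_scope.

(* The ground set is E = 'I_n, and R^E = 'rV[R]_n. *)

(* The real projective line P^1_R = R ∪ {∞}: [Some a] is the point a, [None] is ∞. *)
Definition P1 (R : Type) := option R.

Definition P1pt (R : Type) (n : nat) := 'I_n -> P1 R.

Definition embedP1 (R : realType) (n : nat) (v : 'rV[R]_n) : P1pt R n :=
  fun i => Some (v ord0 i).

(* Standard homogeneous coordinates of a point of (P^1)^E, as a point of
   R^(E ⊔ E): coordinate [lshift n i] is x_i, coordinate [rshift n i] is y_i,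
   with a ↦ [a : 1] and ∞ ↦ [1 : 0]. *)
Definition hom_coords (R : realType) (n : nat) (p : P1pt R n) : 'I_(n + n) -> R :=
  fun k => match split k with
           | inl i => match p i with Some a => a | None => 1 end
           | inr i => match p i with Some _ => 1 | None => 0 end
           end.

Definition multihomog (R : realType) (n : nat) (d : 'I_n -> nat)
    (f : {mpoly R[n + n]}) : Prop :=
  forall m : 'X_{1.. n + n}, m \in msupp f ->
    forall i : 'I_n, (m (lshift n i) + m (rshift n i))%N = d i.

(* Y_V : the Zariski closure of V in (P^1_R)^E, i.e. the intersection of all
   Zariski closed subsets (common zero loci of multihomogeneous polynomials)
   containing V; equivalently the common zero locus of all multihomogeneous
   polynomials vanishing on V.  (Vanishing of a multihomogeneous polynomial
   does not depend on the chosen homogeneous coordinates.) *)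
Definition Y_V (R : realType) (n : nat) (V : {vspace 'rV[R]_n}) : P1pt R n -> Prop :=
  fun p => forall (d : 'I_n -> nat) (f : {mpoly R[n + n]}),
    multihomog d f ->
    (forall v, v \in V -> f.@[hom_coords (embedP1 v)] = 0) ->
    f.@[hom_coords p] = 0.

(* Basic neighbourhoods in the analytic topology of P^1_R:
   for a finite point a, the open intervals (a - eps, a + eps);
   for ∞, the sets {x : |x| > 1/eps} ∪ {∞}.  We only need to test real points b. *)
Definition P1near (R : realType) (eps : R) (q : P1 R) (b : R) : Prop :=
  match q with
  | Some a => `|b - a| < eps
  | None => eps^-1 < `|b|
  end.

(* calY_V : the closure of V ∩ R_{>=0}^E in (P^1_R)^E for the analytic
   (product) topology; the sets {q | forall i, q_i in the eps-neighbourhood of p_i}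
   (eps > 0) form a neighbourhood basis of p. *)
Definition calY_V (R : realType) (n : nat) (V : {vspace 'rV[R]_n}) : P1pt R n -> Prop :=
  fun p => forall eps : R, 0 < eps ->
    exists2 v : 'rV[R]_n, v \in V /\ (forall i, 0 <= v ord0 i) &
      forall i, P1near eps (p i) (v ord0 i).

Definition orthant_inf (R : realType) (n : nat) (F : {set 'I_n}) : P1pt R n -> Prop :=
  fun p => forall i, if i \in F then exists2 a, p i = Some a & 0 <= a
                     else p i = None.

Definition is_flat (R : realType) (n : nat) (V : {vspace 'rV[R]_n}) (F : {set 'I_n}) : Prop :=
  exists2 v, v \in V & F = [set i | v ord0 i == 0].

Definition is_acyclic_flat (R : realType) (n : nat) (V : {vspace 'rV[R]_n})
    (F : {set 'I_n}) : Prop :=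
  is_flat V F /\
  exists2 v, v \in V & forall i, (i \in F -> v ord0 i = 0) /\ (i \notin F -> 0 < v ord0 i).

From HB Require Import structures.
From mathcomp Require Import all_boot all_order all_algebra all_field.
From mathcomp Require Import mpoly.
From mathcomp Require Import reals.
From mathcomp Require Import lra.

(* Both sides consist of the points p of the orthant whose finite part
   a ∈ R^F is the restriction of a vector of V.
   If a is not such a restriction, a linear form c on R^F kills the
   restriction of V but not a.  Its homogenization
   Σ_i c_i x_i Π_{j ∈ F, j ≠ i} y_j vanishes on V but not at p, and by
   continuity of c no nonnegative vector of V comes close to p.
   Conversely, let v ∈ V restrict to a and let w ∈ V vanish on F and be
   positive off F (F is acyclic).  The nonnegative vectors v + s w of V tend
   to p as s → ∞; and a multihomogeneous polynomial vanishing on V vanishes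
   along the curve t ↦ [v + t⁻¹ w] for t ≠ 0, hence, being polynomial in t,
   also at t = 0, where the curve passes through p. *)

Set Implicit Arguments.
Unset Strict Implicit.
Unset Printing Implicit Defensive.

Import Order.TTheory GRing.Theory Num.Theory.
Local Open Scope ring_scope.

Lemma vspace_separation (K : fieldType) (n : nat) (W : {vspace 'rV[K]_n})
    (u : 'rV[K]_n) :
  u \notin W -> exists c : 'I_n -> K,
    (forall x, x \in W -> \sum_j c j * x ord0 j = 0) /\
    \sum_j c j * u ord0 j != 0.
Proof.
move=> uW.
have u_proj : u - projv W u != 0.
  by rewrite subr_eq0; apply: contra uW => /eqP ->; exact: memv_proj.
have /existsP [k uk] : [exists k, (u - projv W u) ord0 k != 0].
  apply: contraR u_proj => /existsPn u0; apply/eqP/rowP => j.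
  by have := u0 j; rewrite negbK => /eqP ->; rewrite mxE.
pose phi x := (x - projv W x) ord0 k.
have phiE x : phi x = \sum_j phi (delta_mx 0 j) * x ord0 j.
  rewrite /phi {1 2}(row_sum_delta x) linear_sum -sumrB summxE.
  by apply: eq_bigr => j _; rewrite linearZ /= -scalerBr mxE mulrC.
exists (fun j => phi (delta_mx 0 j)); split; last by rewrite -phiE.
by move=> x xW; rewrite -phiE /phi projv_id // subrr mxE.
Qed.

Definition in_restriction (K : fieldType) (n : nat) (V : {vspace 'rV[K]_n})
    (F : {set 'I_n}) (a : 'I_n -> K) : Prop :=
  exists2 v, v \in V & {in F, forall i, v ord0 i = a i}.

Lemma restriction_alternative (K : fieldType) (n : nat)
    (V : {vspace 'rV[K]_n}) (F : {set 'I_n}) (a : 'I_n -> K) :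
  in_restriction V F a \/ exists c : 'I_n -> K,
    (forall v, v \in V -> \sum_(i in F) c i * v ord0 i = 0) /\
    \sum_(i in F) c i * a i != 0.
Proof.
pose D : 'M[K]_n := diag_mx (\row_i (i \in F)%:R).
have maskE x i : (x *m D) ord0 i = if i \in F then x ord0 i else 0.
  by rewrite mul_mx_diag !mxE; case: (i \in F); rewrite ?mulr1 ?mulr0.
have sum_mask (c : 'I_n -> K) x :
    \sum_j c j * (x *m D) ord0 j = \sum_(i in F) c i * x ord0 i.
  rewrite [RHS]big_mkcond; apply: eq_bigr => j _; rewrite maskE.
  by case: (j \in F); rewrite ?mulr0.
pose u : 'rV[K]_n := \row_i a i.
case: (boolP (u *m D \in (linfun (mulmxr D) @: V)%VS)).
  move=> /memv_imgP [v vV]; rewrite lfunE /= => uv; left; exists v => // i iF.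
  by have := congr1 (fun z : 'rV_n => z ord0 i) uv; rewrite /= !maskE iF mxE.
move=> /vspace_separation [c [cV cu]]; right; exists c; split.
  move=> v vV; rewrite -sum_mask; apply: cV.
  by rewrite -[v *m D](lfunE (mulmxr D)) memv_img.
by move: cu; rewrite sum_mask; under eq_bigr do rewrite mxE.
Qed.

Lemma poly_eq0_nonzero_roots (R : numDomainType) (G : {poly R}) :
  (forall t, t != 0 -> G.[t] = 0) -> G = 0.
Proof.
move=> G0; apply: (@roots_geq_poly_eq0 _ _ [seq k.+1%:R | k <- iota 0 (size G)]).
- by apply/allP => _ /mapP [k _ ->]; apply/rootP/G0; rewrite pnatr_eq0.
- rewrite map_inj_uniq ?iota_uniq // => k1 k2 /eqP.
  by rewrite eqr_nat eqSS => /eqP.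
- by rewrite size_map size_iota.
Qed.

Lemma meval_line_at0 (R : numDomainType) (m : nat) (f : {mpoly R[m]})
    (x0 x1 : 'I_m -> R) :
  (forall t, t != 0 -> f.@[fun k => x0 k + t * x1 k] = 0) -> f.@[x0] = 0.
Proof.
move=> f0.
pose G := \sum_(mu <- msupp f) f@_mu *: \prod_k ((x0 k)%:P + x1 k *: 'X) ^+ mu k.
have GE t : G.[t] = f.@[fun k => x0 k + t * x1 k].
  rewrite mevalE horner_sum; apply: eq_bigr => mu _.
  rewrite hornerZ horner_prod; congr (_ * _); apply: eq_bigr => k _.
  by rewrite horner_exp hornerD hornerC hornerZ hornerX mulrC.
have -> : f.@[x0] = f.@[fun k => x0 k + 0 * x1 k].
  by apply: meval_eq => k; rewrite mul0r addr0.
by rewrite -GE (@poly_eq0_nonzero_roots _ G) ?horner0 // => t t0; rewrite GE f0.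
Qed.

Lemma split_lshift (m k : nat) (j : 'I_m) : split (lshift k j) = inl j.
Proof. exact: (unsplitK (inl j)). Qed.

Lemma split_rshift (m k : nat) (j : 'I_k) : split (rshift m j) = inr j.
Proof. exact: (unsplitK (inr j)). Qed.

Definition pair_index (n : nat) (k : 'I_(n + n)) : 'I_n :=
  match split k with inl i => i | inr i => i end.

Section Multihomogeneous.
Variables (R : realType) (n : nat).

Lemma meval_multihomog (d : 'I_n -> nat) (f : {mpoly R[n + n]})
    (lam : 'I_n -> R) (x : 'I_(n + n) -> R) :
  multihomog d f ->
  f.@[fun k => lam (pair_index k) * x k] = (\prod_i lam i ^+ d i) * f.@[x].
Proof.
move=> fd; rewrite !mevalE mulr_sumr big_seq_cond [RHS]big_seq_cond.
apply: eq_bigr => m /andP[fm _]; rewrite mulrCA; congr (_ * _).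
rewrite (eq_bigr _ (fun k _ => exprMn _ _ _)) big_split /=; congr (_ * _).
rewrite big_split_ord /= -big_split /=; apply: eq_bigr => i _.
by rewrite /pair_index split_lshift split_rshift -exprD fd.
Qed.

Lemma homogenized_linear_form (F : {set 'I_n}) (c : 'I_n -> R) :
  exists f : {mpoly R[n + n]}, multihomog (fun i => nat_of_bool (i \in F)) f /\
    forall x : 'I_(n + n) -> R, {in F, forall j, x (rshift n j) = 1} ->
      f.@[x] = \sum_(i in F) c i * x (lshift n i).
Proof.
pose mi (i : 'I_n) : 'X_{1.. n + n} := [multinom match split k with
  | inl j => nat_of_bool (j == i)
  | inr j => nat_of_bool ((j \in F) && (j != i)) end | k < n + n].
have miL i j : mi i (lshift n j) = (j == i) by rewrite mnmE split_lshift.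
have miR i j : mi i (rshift n j) = ((j \in F) && (j != i)).
  by rewrite mnmE split_rshift.
exists (\sum_(i in F) c i *: 'X_[mi i]); split.
  move=> m /msupp_sum_le /flattenP [s /mapP [i]].
  rewrite mem_filter => /andP [iF _] -> /msuppZ_le; rewrite msuppX inE => /eqP -> j.
  by rewrite miL miR; case: eqVneq => [->|]; rewrite ?iF ?andbT.
move=> x x1; rewrite (big_morph (meval x) (mevalD x) (meval0 x)).
apply: eq_bigr => i iF; rewrite mevalZ mevalX big_split_ord /=; congr (_ * _).
rewrite [X in _ * X]big1 ?mulr1; last first.
  move=> j _; rewrite miR; case: (boolP (j \in F)) => jF //=.
  by rewrite x1 // expr1n.
rewrite (bigD1 i) //= big1 ?mulr1 ?miL ?eqxx ?expr1 // => j /negbTE ji.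
by rewrite miL ji expr0.
Qed.

End Multihomogeneous.

Lemma exists_scale_ge (R : realFieldType) (I : finType) (A : {pred I})
    (b w : I -> R) :
  {in A, forall i, 0 < w i} -> exists s, {in A, forall i, b i <= s * w i}.
Proof.
move=> wA; exists (\sum_(j in A) `|b j| / w j) => i iA.
have wi := wA i iA; apply: le_trans (ler_norm (b i)) _.
rewrite -ler_pdivrMr // (bigD1 i) //= lerDl sumr_ge0 // => j /andP [jA _].
by rewrite divr_ge0 // ltW // wA.
Qed.

Definition finite_part (R : ringType) (n : nat) (p : P1pt R n) (i : 'I_n) : R :=
  if p i is Some a then a else 0.

Section Orthant.
Variables (R : realType) (n : nat) (V : {vspace 'rV[R]_n}) (F : {set 'I_n}).
Variable p : P1pt R n.
Hypothesis pF : orthant_inf F p.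

Lemma orthant_inf_in i : i \in F -> p i = Some (finite_part p i).
Proof. by move=> iF; have := pF i; rewrite iF /finite_part => -[a ->]. Qed.

Lemma orthant_inf_ge0 i : i \in F -> 0 <= finite_part p i.
Proof. by move=> iF; have := pF i; rewrite iF /finite_part => -[a ->]. Qed.

Lemma orthant_inf_notin i : i \notin F -> p i = None.
Proof. by move=> iF; have := pF i; rewrite (negbTE iF). Qed.

Lemma hom_coords_orthant i : i \in F ->
  hom_coords p (lshift n i) = finite_part p i /\ hom_coords p (rshift n i) = 1.
Proof.
by move=> iF; rewrite /hom_coords split_lshift split_rshift orthant_inf_in.
Qed.

Lemma Y_V_in_restriction : Y_V V p -> in_restriction V F (finite_part p).
Proof.
move=> pY; have [//|[c [cV ca]]] := restriction_alternative V F (finite_part p).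
have [f [fh fE]] := homogenized_linear_form F c.
have fV v : v \in V -> f.@[hom_coords (embedP1 v)] = 0.
  move=> vV; rewrite fE => [|j _]; last by rewrite /hom_coords split_rshift.
  rewrite -[RHS](cV v vV); apply: eq_bigr => i _.
  by rewrite /hom_coords split_lshift.
have := pY _ f fh fV; rewrite fE => [|j jF]; last by case: (hom_coords_orthant jF).
rewrite (eq_bigr (fun i => c i * finite_part p i)) => [|i iF].
  by move/eqP; rewrite (negbTE ca).
by case: (hom_coords_orthant iF) => ->.
Qed.

Lemma calY_V_in_restriction : calY_V V p -> in_restriction V F (finite_part p).
Proof.
move=> pY; have [//|[c [cV ca]]] := restriction_alternative V F (finite_part p).
set S := \sum_(i in F) _ in ca.
pose C := \sum_(i in F) `|c i|.
have C0 : 0 <= C by apply: sumr_ge0.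
have S0 : 0 < `|S| by rewrite normr_gt0.
pose eps := `|S| / (C + 1).
have [|u [uV _] pu] := pY eps; first by rewrite divr_gt0 //; lra.
have : `|S| <= C * eps.
  have -> : S = \sum_(i in F) c i * (finite_part p i - u ord0 i).
    by under eq_bigr do rewrite mulrBr; rewrite sumrB (cV u uV) subr0.
  apply: le_trans (ler_norm_sum _ _ _) _; rewrite mulr_suml.
  apply: ler_sum => i iF; rewrite normrM ler_wpM2l //.
  by have := pu i; rewrite /P1near orthant_inf_in // distrC => /ltW.
rewrite /eps mulrA ler_pdivlMr; last lra.
rewrite mulrDr mulr1 mulrC; lra.
Qed.

Variable w : 'rV[R]_n.
Hypotheses (wV : w \in V) (wF : {in F, forall i, w ord0 i = 0}).

Lemma calY_V_of_restriction :
  (forall i, i \notin F -> 0 < w ord0 i) ->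
  in_restriction V F (finite_part p) -> calY_V V p.
Proof.
move=> wpos [v vV vp] eps eps0.
have inv_eps0 : 0 < eps^-1 by rewrite invr_gt0.
have [s sw] := exists_scale_ge (fun i => eps^-1 + 1 - v ord0 i) wpos.
have eps_lt i : i \notin F -> eps^-1 < (v + s *: w) ord0 i.
  move=> iF; have := sw i iF; rewrite !mxE mulrC; lra.
exists (v + s *: w).
  split=> [|i]; first by rewrite memvD // memvZ.
  case: (boolP (i \in F)) => iF; last by have := eps_lt i iF; lra.
  by rewrite !mxE wF // mulr0 addr0 vp // orthant_inf_ge0.
move=> i; rewrite /P1near; case: (boolP (i \in F)) => iF.
  by rewrite orthant_inf_in // !mxE wF // mulr0 addr0 vp // subrr normr0.
rewrite orthant_inf_notin // ger0_norm; first exact: eps_lt.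
by have := eps_lt i iF; lra.
Qed.

Lemma Y_V_of_restriction :
  (forall i, i \notin F -> w ord0 i != 0) ->
  in_restriction V F (finite_part p) -> Y_V V p.
Proof.
move=> wnz [v vV vp] d f fd fV.
(* Rescaled by mu, p has coordinates (v, 1) on F and (w, 0) off F;
   rescaled by lam, v + t⁻¹ w is that point plus t x1. *)
pose mu i := if i \in F then 1 else w ord0 i.
pose x1 k := match split k with
  | inl i => if i \in F then 0 else v ord0 i
  | inr i => if i \in F then 0 else 1 end.
have : f.@[fun k => mu (pair_index k) * hom_coords p k] = 0.
  apply: (@meval_line_at0 _ _ _ _ x1) => t t0.
  pose lam i := if i \in F then 1 else t.
  rewrite -(mulr0 (\prod_i lam i ^+ d i)) -(fV (v + t^-1 *: w)) ?memvD ?memvZ //.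
  rewrite -meval_multihomog //; apply: meval_eq => k.
  rewrite /pair_index /hom_coords /x1 /embedP1 /mu /lam.
  case: (split k) => i /=; rewrite ?mxE; case: (boolP (i \in F)) => iF.
  - by rewrite orthant_inf_in //= wF // vp // !mulr0 !addr0.
  - by rewrite orthant_inf_notin // mulr1 mulrDr mulrA divff // mul1r addrC.
  - by rewrite orthant_inf_in // mulr0 addr0.
  - by rewrite orthant_inf_notin // !mulr1 mulr0 add0r.
rewrite (meval_multihomog _ _ fd) => /eqP; rewrite mulf_eq0 => /orP [|/eqP //].
move/prodf_eq0 => [i _]; rewrite expf_eq0 /mu.
by case: (boolP (i \in F)) => iF; rewrite ?oner_eq0 ?andbF // (negbTE (wnz i iF)) andbF.
Qed.

End Orthant.

Unset Implicit Arguments.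

Theorem lemma3p3 (R : realType) (n : nat) (V : {vspace 'rV[R]_n}) (F : {set 'I_n}) :
  is_acyclic_flat V F ->
  forall p : P1pt R n,
    (Y_V V p /\ orthant_inf F p) <-> (calY_V V p /\ orthant_inf F p).
Proof.
move=> [_ [w wV hw]] p.
have wF : {in F, forall i, w ord0 i = 0} by move=> i /(proj1 (hw i)).
have wpos i : i \notin F -> 0 < w ord0 i by move=> /(proj2 (hw i)).
have wnz i : i \notin F -> w ord0 i != 0 by move=> /wpos /gt_eqF ->.
split=> -[pY pF]; split=> //.
  exact: (calY_V_of_restriction pF wV wF wpos) (Y_V_in_restriction pF pY).
exact: (Y_V_of_restriction pF wV wF wnz) (calY_V_in_restriction pF pY).
Qed.
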